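(* Let $W_{32,17}$ be the $32\times 32$ matrix $\begin{pmatrix} A & B\\ -B^T & A^T\end{pmatrix}$, where $A$ and $B$ are $16\times 16$ negacirculant matrices with first rows $r_A=(0,0,1,1,0,0,0,0,1,0,0,0,0,1,1,0)$ and $r_B=(0,1,-1,-1,0,-1,1,0,1,-1,1,1,1,0,-1,1)$ (a skew-symmetric weighing matrix of order $32$ and weight $17$). Let $C_3(W_{32,17})$ be the ternary code of length $64$ with generator matrix $(I\ \ W_{32,17})$, entries read modulo $3$. Then $A_3(C_3(W_{32,17}))$ contains a $7k$-frame and a $23k$-frame for every positive integer $k$.
   Context: An $N\times N$ negacirculant matrix with first row $(r_0,\dots,r_{N-1})$ is the matrix whose $(i,j)$ entry ($0\le i,j\le N-1$) is $r_{j-i}$ if $j\ge i$ and $-r_{N+j-i}$ if $j<i$. A skew-symmetric weighing matrix of order $n$ and weight $w$ is an $n\times n$ $(0,\pm1)$-matrix $W$ with $W^T=-W$ and $WW^T=wI$. Construction A: with $\rho:\mathbb{Z}_k\to\mathbb{Z}$ sending $0,1,\dots,k-1$ to $0,1,\dots,k-1$, for a $\mathbb{Z}_k$-code $C$ of length $N$ set $A_k(C)=\frac{1}{\sqrt{k}}\{\rho(C)+k\mathbb{Z}^N\}$. A $t$-frame of a lattice in dimension $N$ is a set of $N$ lattice vectors $f_1,\dots,f_N$ with $(f_i,f_j)=t\,\delta_{i,j}$. *)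

From HB Require Import structures.
From mathcomp Require Import all_boot all_order all_algebra.
Set Implicit Arguments. Unset Strict Implicit. Unset Printing Implicit Defensive.
Import Order.TTheory GRing.Theory Num.Theory.
Local Open Scope ring_scope.

Definition negacirc (N : nat) (r : seq int) : 'M[int]_N :=
  \matrix_(i < N, j < N)
    if (i <= j)%N then r`_(j - i) else - r`_(N + j - i).

Definition rA : seq int := [:: 0; 0; 1; 1; 0; 0; 0; 0; 1; 0; 0; 0; 0; 1; 1; 0].
Definition rB : seq int := [:: 0; 1; -1; -1; 0; -1; 1; 0; 1; -1; 1; 1; 1; 0; -1; 1].

Definition nA : 'M[int]_16 := negacirc 16 rA.
Definition nB : 'M[int]_16 := negacirc 16 rB.

Definition W32_17 : 'M[int]_(16 + 16) := block_mx nA nB (- nB^T) nA^T.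

Definition red3 (z : int) : 'F_3 := z%:~R.

Definition G3 : 'M['F_3]_(16 + 16, (16 + 16) + (16 + 16)) :=
  row_mx 1%:M (map_mx red3 W32_17).

Definition C3W (c : 'rV['F_3]_((16 + 16) + (16 + 16))) : Prop :=
  exists m : 'rV['F_3]_(16 + 16), c = m *m G3.

(* Construction A: A_k(C) = (1/sqrt k) (rho(C) + k Z^N); for k = 3, a real
   vector v lies in A_3(C) iff v = (1/sqrt 3) x with x in Z^N and x mod 3 in C. *)
Definition constrA3 (R : rcfType) (N : nat) (C : 'rV['F_3]_N -> Prop)
    (v : 'rV[R]_N) : Prop :=
  exists x : 'rV[int]_N,
    C (map_mx red3 x) /\ v = (Num.sqrt (3 : R))^-1 *: map_mx (fun z : int => z%:~R) x.

Definition dotR (R : rcfType) (N : nat) (u v : 'rV[R]_N) : R :=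
  \sum_(l < N) u 0 l * v 0 l.

Definition has_frame (R : rcfType) (N : nat) (L : 'rV[R]_N -> Prop) (t : R) : Prop :=
  exists f : 'I_N -> 'rV[R]_N,
    (forall i, L (f i)) /\
    (forall i j, dotR (f i) (f j) = if i == j then t else 0).

From HB Require Import structures.
From mathcomp Require Import all_boot all_order all_algebra.
From mathcomp Require Import zify ring.
Set Implicit Arguments. Unset Strict Implicit. Unset Printing Implicit Defensive.
Import Order.TTheory GRing.Theory Num.Theory.

(* Write k = a^2 + b^2 + c^2 + d^2 (Lagrange) and let Q be the quaternion matrix of (a, b, c, d)
   with blocks scalar in dimension 16, so Q Q^T = k I.  For the skew weighing matrix W of weight 17,
   F = [[x I, y W], [y W, x I]] has F F^T = (x^2 + 17 y^2) I, and when x = y mod 3 the rows of F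
   reduce into C_3(W) because W^2 = -17 I = I mod 3.  So the rows of Q F, scaled by 1/sqrt 3, form
   a (k (x^2 + 17 y^2) / 3)-frame of A_3(C_3(W)); (x, y) = (-2, 1) and (-1, 2) give 7k and 23k. *)

Lemma eq_sqr_mod_prime p x y : prime p -> (2 * x < p)%N -> (2 * y < p)%N ->
  x * x = y * y %[mod p] -> x = y.
Proof.
move=> pp hx hy.
wlog le_yx : x y hx hy / (y <= x)%N.
  move=> H; case: (leqP y x) => [le|/ltnW le]; first exact: H.
  by move=> e; apply/esym/H.
move/eqP; rewrite eqn_mod_dvd ?leq_mul //.
have -> : (x * x - y * y = (x - y) * (x + y))%N by rewrite mulnBl !mulnDr; lia.
rewrite Euclid_dvdM // => /orP[] /dvdn_leq; lia.
Qed.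

Lemma exists_sqr_add_sqr_add1_dvd p : prime p -> odd p ->
  exists x y, [/\ (2 * x < p)%N, (2 * y < p)%N & (p %| x * x + y * y + 1)%N].
Proof.
(* Pigeonhole: the (p + 1)/2 residues x^2 and the (p + 1)/2 residues -1 - y^2 cannot all differ. *)
move=> pp p_odd; have p_gt0 := prime_gt0 pp.
pose h := p./2.+1.
have half (x : 'I_h) : (2 * x < p)%N.
  by have := ltn_ord x; have := odd_double_half p; rewrite p_odd /h; lia.
pose f (x : 'I_h) : 'I_p := Ordinal (ltn_pmod (x * x) p_gt0).
have lt_g (y : 'I_h) : (p - 1 - y * y %% p < p)%N by lia.
pose g (y : 'I_h) : 'I_p := Ordinal (lt_g y).
have inj_f : injective f.
  move=> x y /(congr1 val) /= e; apply/val_inj.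
  exact: eq_sqr_mod_prime pp (half x) (half y) e.
have inj_g : injective g.
  move=> x y /(congr1 val) /= e; apply/val_inj.
  apply: eq_sqr_mod_prime pp (half x) (half y) _.
  by have := ltn_pmod (x * x) p_gt0; have := ltn_pmod (y * y) p_gt0; rewrite /eqn; lia.
have : ~~ [disjoint f @: setT & g @: setT].
  apply/negP => dj; have := max_card (mem (f @: setT :|: g @: setT)).
  rewrite cardsU (disjoint_setI0 dj) cards0 subn0 !card_imset // cardsT !card_ord /h.
  by have := odd_double_half p; rewrite p_odd -muln2; lia.
case/pred0Pn => z /andP[/imsetP[x _ ->] /imsetP[y _ /(congr1 val) /= e]].
exists (nat_of_ord x), (nat_of_ord y); split; [exact: half | exact: half |].
apply/dvdnP; exists (x * x %/ p + y * y %/ p + 1).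
have := ltn_pmod (y * y) p_gt0.
by rewrite {1}(divn_eq (x * x) p) {1}(divn_eq (y * y) p) e; lia.
Qed.

Local Open Scope ring_scope.

Definition sum4sq (n : int) : Prop :=
  exists a b c d : int, n = a * a + b * b + c * c + d * d.

Lemma sum4sq_mul m n : sum4sq m -> sum4sq n -> sum4sq (m * n).
Proof.
move=> [a1 [a2 [a3 [a4 ->]]]] [b1 [b2 [b3 [b4 ->]]]].
exists (a1 * b1 + a2 * b2 + a3 * b3 + a4 * b4), (a1 * b2 - a2 * b1 + a3 * b4 - a4 * b3),
  (a1 * b3 - a2 * b4 - a3 * b1 + a4 * b2), (a1 * b4 + a2 * b3 - a3 * b2 - a4 * b1).
ring.
Qed.

Lemma centered_residue (a m : int) : 0 < m -> exists q, - m < 2 * (a - m * q) <= m.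
Proof.
move=> m0; exists ((2 * a + m - 1) %/ (2 * m))%Z.
have := divz_eq (2 * a + m - 1) (2 * m).
have := modz_ge0 (2 * a + m - 1) (_ : 2 * m != 0).
have := ltz_pmod (2 * a + m - 1) (_ : 0 < 2 * m).
lia.
Qed.

Lemma prime_neq_proper_mul (p : nat) (m s : int) :
  prime p -> 1 < m < p%:Z -> p%:Z <> m * s.
Proof.
move=> /primeP[_ pdiv] hm ps.
have : (absz m %| p)%N by apply/dvdnP; exists (absz s); nia.
by move/pdiv => /orP[] /eqP; lia.
Qed.

Lemma sum4sq_cancel_square (m n c1 c2 c3 c4 : int) : m != 0 ->
  (m %| c1)%Z -> (m %| c2)%Z -> (m %| c3)%Z -> (m %| c4)%Z ->
  m * m * n = c1 * c1 + c2 * c2 + c3 * c3 + c4 * c4 -> sum4sq n.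
Proof.
move=> m0 /divzK e1 /divzK e2 /divzK e3 /divzK e4 e.
exists (c1 %/ m)%Z, (c2 %/ m)%Z, (c3 %/ m)%Z, (c4 %/ m)%Z.
apply: (mulfI (mulf_neq0 m0 m0)); rewrite e.
move: (c1 %/ m)%Z (c2 %/ m)%Z (c3 %/ m)%Z (c4 %/ m)%Z e1 e2 e3 e4 => d1 d2 d3 d4 <- <- <- <-.
ring.
Qed.

Lemma sum4sq_descent (p m r a1 a2 a3 a4 q1 q2 q3 q4 : int) : m != 0 ->
  m * p = a1 * a1 + a2 * a2 + a3 * a3 + a4 * a4 ->
  m * r = (a1 - m * q1) * (a1 - m * q1) + (a2 - m * q2) * (a2 - m * q2)
          + (a3 - m * q3) * (a3 - m * q3) + (a4 - m * q4) * (a4 - m * q4) ->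
  sum4sq (r * p).
Proof.
set b1 := a1 - m * q1; set b2 := a2 - m * q2; set b3 := a3 - m * q3; set b4 := a4 - m * q4.
move=> m_neq0 Ha Hb.
(* Euler's products for (a_i) and (b_i) are divisible by m, since b_i = a_i mod m. *)
apply: (@sum4sq_cancel_square m _ (a1 * b1 + a2 * b2 + a3 * b3 + a4 * b4)
  (a1 * b2 - a2 * b1 + a3 * b4 - a4 * b3) (a1 * b3 - a2 * b4 - a3 * b1 + a4 * b2)
  (a1 * b4 + a2 * b3 - a3 * b2 - a4 * b1)) => //.
- apply/dvdzP; exists (p - (a1 * q1 + a2 * q2 + a3 * q3 + a4 * q4)).
  rewrite /b1 /b2 /b3 /b4; lia.
- by apply/dvdzP; exists (a2 * q1 - a1 * q2 + a4 * q3 - a3 * q4); rewrite /b1 /b2 /b3 /b4; ring.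
- by apply/dvdzP; exists (a3 * q1 - a1 * q3 + a2 * q4 - a4 * q2); rewrite /b1 /b2 /b3 /b4; ring.
- by apply/dvdzP; exists (a4 * q1 + a3 * q2 - a2 * q3 - a1 * q4); rewrite /b1 /b2 /b3 /b4; ring.
- have -> : m * m * (r * p) = (m * p) * (m * r) by ring.
  rewrite Ha Hb; ring.
Qed.

Lemma sum4sq_descent_step (p : nat) (m : int) : prime p -> 1 < m < p%:Z ->
  sum4sq (m * p%:Z) -> exists2 r, 0 < r < m & sum4sq (r * p%:Z).
Proof.
(* With b_i the centered residues of a_i mod m, sum b_i^2 = m r for some 0 <= r <= m; the extreme
   values r = 0 and r = m would make m a proper divisor of p. *)
move=> pp hm [a1 [a2 [a3 [a4 Ha]]]].
have m_gt0 : 0 < m by lia.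
have [q1 h1] := centered_residue a1 m_gt0; have [q2 h2] := centered_residue a2 m_gt0.
have [q3 h3] := centered_residue a3 m_gt0; have [q4 h4] := centered_residue a4 m_gt0.
set b1 := a1 - m * q1 in h1 *; set b2 := a2 - m * q2 in h2 *.
set b3 := a3 - m * q3 in h3 *; set b4 := a4 - m * q4 in h4 *.
pose r := p%:Z - 2 * (a1 * q1 + a2 * q2 + a3 * q3 + a4 * q4)
          + m * (q1 * q1 + q2 * q2 + q3 * q3 + q4 * q4).
have Hb : m * r = b1 * b1 + b2 * b2 + b3 * b3 + b4 * b4 by rewrite /r /b1 /b2 /b3 /b4; lia.
exists r; last exact: sum4sq_descent (lt0r_neq0 m_gt0) Ha Hb.
have r_ge0 : 0 <= r by nia.
have r_le : r <= m by nia.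
have r_neq0 : r != 0.
  apply/eqP => r0; rewrite r0 mulr0 in Hb.
  have [z1 z2 z3 z4] : [/\ b1 = 0, b2 = 0, b3 = 0 & b4 = 0] by split; nia.
  move: z1 z2 z3 z4; rewrite /b1 /b2 /b3 /b4.
  move=> /subr0_eq z1 /subr0_eq z2 /subr0_eq z3 /subr0_eq z4.
  apply: (@prime_neq_proper_mul p m (q1 * q1 + q2 * q2 + q3 * q3 + q4 * q4) pp hm).
  by apply: (mulfI (lt0r_neq0 m_gt0)); rewrite Ha z1 z2 z3 z4; ring.
have r_neqm : r != m.
  apply/eqP => rm; rewrite rm in Hb.
  have [z1 z2 z3 z4] : [/\ 2 * b1 = m, 2 * b2 = m, 2 * b3 = m & 2 * b4 = m] by split; nia.
  move: z1 z2 z3 z4; rewrite /b1 /b2 /b3 /b4 => z1 z2 z3 z4.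
  apply: (@prime_neq_proper_mul p m
    (1 + (q1 * q1 + q1) + (q2 * q2 + q2) + (q3 * q3 + q3) + (q4 * q4 + q4)) pp hm).
  apply: (mulfI (_ : 4 * m != 0)); first lia.
  rewrite -[4 * m * _]mulrA Ha.
  have -> : 4 * (a1 * a1 + a2 * a2 + a3 * a3 + a4 * a4) =
    (2 * a1) * (2 * a1) + (2 * a2) * (2 * a2) + (2 * a3) * (2 * a3) + (2 * a4) * (2 * a4)
    by ring.
  have -> : 2 * a1 = m * (1 + 2 * q1) by lia.
  have -> : 2 * a2 = m * (1 + 2 * q2) by lia.
  have -> : 2 * a3 = m * (1 + 2 * q3) by lia.
  have -> : 2 * a4 = m * (1 + 2 * q4) by lia.
  ring.
lia.
Qed.

Lemma sum4sq_prime_of_multiple (p : nat) (m : int) : prime p -> 0 < m < p%:Z ->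
  sum4sq (m * p%:Z) -> sum4sq p%:Z.
Proof.
move=> pp; have [n] := ubnP (absz m); elim: n m => // n IH m lt_mn hm hs.
have [m1|m_neq1] := eqVneq m 1; first by rewrite m1 mul1r in hs.
have [|r hr hrs] := sum4sq_descent_step pp (_ : 1 < m < p%:Z) hs; first lia.
by apply: (IH r) => //; lia.
Qed.

Lemma sum4sq_prime p : prime p -> sum4sq p%:Z.
Proof.
move=> pp; have [->|p_odd] := even_prime pp; first by exists 1, 1, 0, 0.
have [x [y [hx hy /dvdnP[m hm]]]] := exists_sqr_add_sqr_add1_dvd pp p_odd.
apply: (@sum4sq_prime_of_multiple p m%:Z pp).
  have := prime_gt1 pp; nia.
by exists x%:Z, y%:Z, 1, 0; lia.
Qed.

Theorem sum4sq_nat (n : nat) : sum4sq n%:Z.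
Proof.
elim/ltn_ind: n => n IH; have [n_le1|n_gt1] := leqP n 1.
  by case: n n_le1 {IH} => [|[|//]] _; [exists 0, 0, 0, 0 | exists 1, 0, 0, 0].
have pp := pdiv_prime n_gt1; have p_gt1 := prime_gt1 pp.
rewrite -(divnK (pdiv_dvd n)) PoszM; apply: sum4sq_mul (sum4sq_prime pp).
by apply: IH; rewrite ltn_Pdiv // ltnW.
Qed.

Definition negacirc_entry (N : nat) (r : seq int) (i j : nat) : int :=
  if (i <= j)%N then r`_(j - i) else - r`_(N + j - i).

(* Matrices and big sums do not compute, so W32_17 is checked through explicit entry and sum
   functions on nat indices. *)
Definition W32_17_entry (i j : nat) : int :=
  if (i < 16)%N then
    if (j < 16)%N then negacirc_entry 16 rA i j else negacirc_entry 16 rB i (j - 16)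
  else
    if (j < 16)%N then - negacirc_entry 16 rB j (i - 16)
    else negacirc_entry 16 rA (j - 16) (i - 16).

Lemma W32_17E (i j : 'I_(16 + 16)) : W32_17 i j = W32_17_entry i j.
Proof.
rewrite /W32_17 /W32_17_entry.
case: split_ordP => i' ->; case: split_ordP => j' ->;
  rewrite ?block_mxEul ?block_mxEur ?block_mxEdl ?block_mxEdr /nA /nB /negacirc !mxE;
  by have := ltn_ord i'; have := ltn_ord j'; move=> hj hi; rewrite /= ?addKn.
Qed.

Definition sum_iota (n : nat) (g : nat -> int) : int :=
  foldr (fun l s => g l + s) 0 (iota 0 n).

Lemma sum_iotaE n (g : nat -> int) : \sum_(l < n) g l = sum_iota n g.
Proof.
rewrite -(big_mkord xpredT) /index_iota subn0 /sum_iota.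
by elim: (iota 0 n) => [|x s IH]; rewrite ?big_nil ?big_cons ?IH.
Qed.

Lemma all_iota2P n (P : nat -> nat -> bool) :
  all (fun i => all (P i) (iota 0 n)) (iota 0 n) -> forall i j : 'I_n, P i j.
Proof.
move=> /allP hP i j.
have /allP hPi : all (P i) (iota 0 n) by apply: hP; rewrite mem_iota ltn_ord.
by apply: hPi; rewrite mem_iota ltn_ord.
Qed.

Lemma W32_17_skew : W32_17^T = - W32_17.
Proof.
apply/matrixP => i j; rewrite [LHS]mxE [RHS]mxE !W32_17E; apply/eqP.
have check : all (fun i => all (fun j => W32_17_entry j i == - W32_17_entry i j)
  (iota 0 32)) (iota 0 32) by vm_compute.
exact: all_iota2P check i j.
Qed.

Lemma W32_17_weighing : W32_17 *m W32_17^T = 17%:M.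
Proof.
apply/matrixP => i j; rewrite [LHS]mxE [RHS]mxE.
under eq_bigr => l _ do rewrite [W32_17^T _ _]mxE !W32_17E.
rewrite (sum_iotaE 32 (fun l => W32_17_entry i l * W32_17_entry j l)); apply/eqP.
have check : all (fun i => all (fun j =>
  sum_iota 32 (fun l => W32_17_entry i l * W32_17_entry j l) == 17 *+ (i == j))
  (iota 0 32)) (iota 0 32) by vm_compute.
exact: all_iota2P check i j.
Qed.

Lemma W32_17_mul_self : W32_17 *m W32_17 = - 17%:M.
Proof. by rewrite -W32_17_weighing W32_17_skew mulmxN opprK. Qed.

Section GramMatrices.
Variable R : comRingType.

Lemma gram_mul_scalar m n p (Y : 'M[R]_(m, n)) (Z : 'M[R]_(n, p)) (s : R) :
  Z *m Z^T = s%:M -> (Y *m Z) *m (Y *m Z)^T = s *: (Y *m Y^T).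
Proof.
by move=> ZZ; rewrite trmx_mul mulmxA -(mulmxA Y) ZZ mul_mx_scalar scalemxAl.
Qed.

Definition frame_block n (W : 'M[R]_n) (a b : R) : 'M[R]_(n + n) :=
  block_mx a%:M (b *: W) (b *: W) a%:M.

Lemma frame_block_gram n (W : 'M[R]_n) (w a b : R) :
  W^T = - W -> W *m W^T = w%:M ->
  frame_block W a b *m (frame_block W a b)^T = (a * a + w * (b * b))%:M.
Proof.
move=> W_skew W_weigh.
rewrite /frame_block tr_block_mx !tr_scalar_mx !linearZ /= mulmx_block scalar_mx_block.
rewrite !mul_scalar_mx !mul_mx_scalar -!scalemxAl -!scalemxAr W_weigh W_skew.
by congr block_mx; apply/matrixP => i j; rewrite !mxE; ring.
Qed.

Definition quat_mx n (a b c d : R) : 'M[R]_((n + n) + (n + n)) :=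
  block_mx (block_mx a%:M b%:M (- b)%:M a%:M) (block_mx c%:M d%:M (- d)%:M c%:M)
           (block_mx (- c)%:M d%:M (- d)%:M (- c)%:M) (block_mx a%:M (- b)%:M b%:M a%:M).

Lemma quat_mx_gram n (a b c d : R) :
  quat_mx n a b c d *m (quat_mx n a b c d)^T = (a * a + b * b + c * c + d * d)%:M.
Proof.
rewrite /quat_mx !tr_block_mx !tr_scalar_mx !mulmx_block !scalar_mx_block.
rewrite !add_block_mx -!block_mx0 -!scalar_mxM.
by congr block_mx; congr block_mx; apply/matrixP => i j; rewrite !mxE; ring.
Qed.

End GramMatrices.

HB.instance Definition _ := GRing.RMorphism.copy red3 ( *~%R 1).

Lemma frame_block_mod3 (a b : int) : red3 a = red3 b ->
  map_mx red3 (frame_block W32_17 a b) = (red3 b *: col_mx 1%:M (map_mx red3 W32_17)) *m G3.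
Proof.
move=> ab; have red17 : red3 17 = -1 by apply/val_inj.
rewrite -scalemxAl /G3 mul_col_row -map_mxM W32_17_mul_self !mul1mx mulmx1.
rewrite /frame_block map_block_mx map_mxN !map_scalar_mx !map_mxZ /= ab red17.
by rewrite scale_block_mx scalemx1 -raddfN opprK scalemx1.
Qed.

Lemma C3W_row_mul_frame_block m (Y : 'M[int]_(m, (16 + 16) + (16 + 16))) (a b : int) s :
  red3 a = red3 b -> C3W (map_mx red3 (row s (Y *m frame_block W32_17 a b))).
Proof.
move=> ab; exists (row s (map_mx red3 Y *m (red3 b *: col_mx 1%:M (map_mx red3 W32_17)))).
by rewrite map_row -row_mul map_mxM frame_block_mod3 // mulmxA.
Qed.

Lemma has_frame_of_gram (R : rcfType) N (C : 'rV['F_3]_N -> Prop) (X : 'M[int]_N)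
    (t : nat) :
  X *m X^T = (3 * t)%:R%:M -> (forall s, C (map_mx red3 (row s X))) ->
  has_frame (constrA3 (R := R) C) t%:R.
Proof.
move=> XX rowsC.
exists (fun s => (Num.sqrt 3)^-1 *: map_mx (fun z : int => z%:~R) (row s X)); split.
  by move=> s; exists (row s X).
move=> i j; rewrite /dotR.
have sqrt3 : (Num.sqrt (3 : R))^-1 * (Num.sqrt 3)^-1 = 3^-1.
  by rewrite -invfM -expr2 sqr_sqrtr // ler0n.
rewrite (eq_bigr (fun l => 3^-1 * (X i l * X^T l j)%:~R)); last first.
  by move=> l _; rewrite !mxE intrM -sqrt3; ring.
have := congr1 (fun M : 'M_N => M i j) XX; rewrite !mxE => gram_ij.
rewrite -mulr_sumr -rmorph_sum /= gram_ij.
case: (i == j); last by rewrite mulr0n mulr0.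
by rewrite mulr1n rmorph_nat natrM mulrA mulVf ?mul1r // pnatr_eq0.
Qed.

Theorem lemma7p2 (R : rcfType) (k : nat) (hk : (0 < k)%N) :
  has_frame (@constrA3 R _ C3W) (7 * k)%:R /\ has_frame (@constrA3 R _ C3W) (23 * k)%:R.
Proof.
have [a [b [c [d k_sum]]]] := sum4sq_nat k.
have frame (al be : int) (t : nat) : red3 al = red3 be ->
    al * al + 17 * (be * be) = (3 * t)%:R -> has_frame (@constrA3 R _ C3W) (t * k)%:R.
  move=> al_be gram.
  apply: (@has_frame_of_gram R _ C3W (quat_mx 16 a b c d *m frame_block W32_17 al be)).
    rewrite (gram_mul_scalar _ (frame_block_gram _ _ W32_17_skew W32_17_weighing)).
    by rewrite quat_mx_gram -k_sum gram scale_scalar_mx; congr _%:M; lia.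
  by move=> s; apply: C3W_row_mul_frame_block.
by split; [apply: (frame (-2) 1) | apply: (frame (-1) 2)] => //; apply/val_inj.
Qed.
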